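(* Let $\Omega\subset\mathbb{R}^{n+1}$ be a compact convex body with $C^1$ boundary, fix $\Theta\in[\frac12,1)$ and let $r_\Theta>0$ satisfy $\omega_\Omega(r_\Theta)<\sqrt{2-2\Theta}$. Fix $X_0\in\partial\Omega$, choose orthonormal coordinates with $\mathcal{N}_\Omega(X_0)=e_{n+1}$, let $x_0\in\mathbb{R}^n$ be the first $n$ coordinates of $X_0$, and let $\beta_{X_0}:\Omega_{X_0}\to\mathbb{R}$ be the concave function whose graph is $\partial\Omega^+(X_0)$. Then for every $x_1\in B^n_{r_\Theta/4}(x_0)$ and every $x_2\in\Omega_{X_0}$, $$|\beta_{X_0}(x_1)-\beta_{X_0}(x_2)|\le\frac{4\,\mathrm{diam}(\Omega)}{r_\Theta}|x_1-x_2|.$$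
   Context: $\mathcal{N}_\Omega(X)$ is the outward unit normal at $X\in\partial\Omega$; $\omega_\Omega(r):=\sup\{|\mathcal{N}_\Omega(X_1)-\mathcal{N}_\Omega(X_2)|: X_1,X_2\in\partial\Omega,|X_1-X_2|<r\}$. $\partial\Omega^+(X_0):=\{X\in\partial\Omega\mid\langle\mathcal{N}_\Omega(X),\mathcal{N}_\Omega(X_0)\rangle>0\}$. In coordinates where $\mathcal{N}_\Omega(X_0)=e_{n+1}$, the orthogonal projection of $\partial\Omega^+(X_0)$ to $\mathbb{R}^n$ (the first $n$ coordinates) is an open bounded convex set $\Omega_{X_0}$, and $\partial\Omega^+(X_0)=\{(x,\beta_{X_0}(x)):x\in\Omega_{X_0}\}$ for a $C^1$ concave function $\beta_{X_0}$. *)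

(* Points of R^{n+1} are pairs (x, t) : 'rV[R]_n * R,
   x = first n coordinates, t = (n+1)-st coordinate; Euclidean structure explicit. *)
From HB Require Import structures.
From mathcomp Require Import all_boot all_order all_algebra.
From mathcomp Require Import all_classical all_reals all_analysis.
Set Implicit Arguments. Unset Strict Implicit. Unset Printing Implicit Defensive.
Import Order.TTheory GRing.Theory Num.Theory.
Import numFieldNormedType.Exports.
Local Open Scope classical_set_scope.
Local Open Scope ring_scope.

Section Defs.
Variables (R : realType) (n : nat).

Local Notation pt := ('rV[R]_n * R)%type.

Definition dotn (x y : 'rV[R]_n) : R := \sum_(i < n) x ord0 i * y ord0 i.
Definition enorm (x : 'rV[R]_n) : R := Num.sqrt (dotn x x).

Definition padd (X Y : pt) : pt := (X.1 + Y.1, X.2 + Y.2).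
Definition psub (X Y : pt) : pt := (X.1 - Y.1, X.2 - Y.2).
Definition pscale (a : R) (X : pt) : pt := (a *: X.1, a * X.2).
Definition pdot (X Y : pt) : R := dotn X.1 Y.1 + X.2 * Y.2.
Definition pnorm (X : pt) : R := Num.sqrt (pdot X X).

Definition e_last : pt := (0, 1).

Definition convex_set (O : set pt) : Prop :=
  forall X Y a, O X -> O Y -> 0 <= a <= 1 ->
    O (padd (pscale a X) (pscale (1 - a) Y)).

Definition convex_body (O : set pt) : Prop :=
  [/\ compact O, convex_set O & interior O !=set0].

Definition bdry (O : set pt) : set pt := closure O `\` interior O.

Definition diam (O : set pt) : R :=
  sup [set d | exists X Y, [/\ O X, O Y & d = pnorm (psub X Y)]].

Definition outward_unit_normal (O : set pt) (X N : pt) : Prop :=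
  pnorm N = 1 /\ forall Y, O Y -> pdot (psub Y X) N <= 0.

(* N is THE outward unit normal field of a convex body O with C^1 boundary:
   at every boundary point the outward unit normal exists, is unique and it
   depends continuously on the point. *)
Definition C1_normal_field (O : set pt) (N : pt -> pt) : Prop :=
  [/\ forall X, bdry O X -> outward_unit_normal O X (N X),
      forall X M, bdry O X -> outward_unit_normal O X M -> M = N X
    & {within bdry O, continuous N}].

Definition omega (O : set pt) (N : pt -> pt) (r : R) : R :=
  sup [set d | exists X1 X2, [/\ bdry O X1, bdry O X2,
         pnorm (psub X1 X2) < r & d = pnorm (psub (N X1) (N X2))]].

Definition bdry_plus (O : set pt) (N : pt -> pt) (X0 : pt) : set pt :=
  [set X | bdry O X /\ pdot (N X) (N X0) > 0].

Definition proj_plus (O : set pt) (N : pt -> pt) (X0 : pt) : set 'rV[R]_n :=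
  [set x | exists t, bdry_plus O N X0 (x, t)].

End Defs.

(* Near X0 the normal is almost vertical: a boundary point Q with
   |Q - X0| < r has |N Q - e_{n+1}|^2 = 2 - 2 (N Q)_{n+1} < 2 - 2 Theta, so
   (N Q)_{n+1} > Theta >= 1/2, and the supporting hyperplane at such a point
   confines the part of Omega above Q to a cone of slope sqrt 3.  The main
   step is that every point of dOmega^+(X0) over B_{r/2}(x0) is such a steep
   point.  Following the top of Omega along the segment from x0 to x, its
   depth below X0 grows at most linearly (concavity) and, as long as the top
   stays within r of X0, it stays in the cone of slope sqrt 3 (steepness); a
   creeping induction keeps both properties up to the endpoint, where the
   supporting hyperplane at (x, beta x), whose normal points upwards, yields
   |(x, beta x) - X0|^2 <= 4 |x - x0|^2 < r^2.  Two points of the graph at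
   distance < r/4 are then both steep, so their heights differ by at most
   sqrt 3 |x1 - x2|; for farther points the bound diam Omega suffices, since
   diam Omega >= r: the lowest point of Omega under an interior point has a
   downward normal and so lies at distance >= r from X0. *)

From Pilot Require Import Defs.
From HB Require Import structures.
From mathcomp Require Import all_boot all_order all_algebra.
From mathcomp Require Import all_classical all_reals all_analysis.
From mathcomp Require Import ring lra.
Import Order.TTheory GRing.Theory Num.Theory.
Import numFieldNormedType.Exports.
Local Open Scope classical_set_scope.
Local Open Scope ring_scope.

Section EuclideanSpace.
Context {R : realType} {n : nat}.
Implicit Types x y z : 'rV[R]_n.

Lemma dotnC x y : dotn x y = dotn y x.
Proof. by apply: eq_bigr => i _; rewrite mulrC. Qed.

Lemma dotnDl x y z : dotn (x + y) z = dotn x z + dotn y z.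
Proof. by rewrite /dotn -big_split; apply: eq_bigr => i _; rewrite !mxE mulrDl. Qed.

Lemma dotnZl a x z : dotn (a *: x) z = a * dotn x z.
Proof. by rewrite /dotn mulr_sumr; apply: eq_bigr => i _; rewrite !mxE mulrA. Qed.

Lemma dotnBl x y z : dotn (x - y) z = dotn x z - dotn y z.
Proof. by rewrite -scaleN1r dotnDl dotnZl mulN1r. Qed.

Lemma dotnDr x y z : dotn z (x + y) = dotn z x + dotn z y.
Proof. by rewrite !(dotnC z) dotnDl. Qed.

Lemma dotnZr a x z : dotn z (a *: x) = a * dotn z x.
Proof. by rewrite !(dotnC z) dotnZl. Qed.

Lemma dotnBr x y z : dotn z (x - y) = dotn z x - dotn z y.
Proof. by rewrite !(dotnC z) dotnBl. Qed.

Lemma dotn0r x : dotn x 0 = 0.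
Proof. by rewrite /dotn big1 // => i _; rewrite mxE mulr0. Qed.

Lemma dotn_ge0 x : 0 <= dotn x x.
Proof. by rewrite sumr_ge0 // => i _; rewrite -expr2 sqr_ge0. Qed.

Lemma dotn_eq0 x : (dotn x x == 0) = (x == 0).
Proof.
apply/idP/eqP => [|->]; last by rewrite dotn0r.
move=> /eqP/psumr_eq0P x0; apply/rowP => j; rewrite mxE.
have /eqP := x0 (fun i _ => sqr_ge0 (x ord0 i)) j isT.
by rewrite -expr2 sqrf_eq0 => /eqP.
Qed.

Lemma dotn_CauchySchwarz x y : dotn x y ^+ 2 <= dotn x x * dotn y y.
Proof.
have [/eqP|y0] := eqVneq (dotn y y) 0.
  by rewrite dotn_eq0 => /eqP->; rewrite !dotn0r expr0n /= mulr0.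
have yy0 : 0 < dotn y y by rewrite lt_def y0 dotn_ge0.
have := dotn_ge0 (dotn y y *: x - dotn x y *: y).
rewrite !dotnBl !dotnBr !dotnZl !dotnZr (dotnC y x).
have -> : dotn y y * (dotn y y * dotn x x) - dotn y y * (dotn x y * dotn x y) -
  (dotn x y * (dotn y y * dotn x y) - dotn x y * (dotn x y * dotn y y)) =
  dotn y y * (dotn x x * dotn y y - dotn x y ^+ 2) by ring.
by rewrite pmulr_rge0 // subr_ge0.
Qed.

Lemma dotn_sqrN x : dotn (- x) (- x) = dotn x x.
Proof. by rewrite -scaleN1r dotnZl dotnZr mulrA mulrNN !mul1r. Qed.

Lemma dotn_sqrD_le x y : dotn (x + y) (x + y) <= 2 * dotn x x + 2 * dotn y y.
Proof.
have := dotn_ge0 (x - y).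
rewrite !dotnBl !dotnBr !dotnDl !dotnDr (dotnC y x); lra.
Qed.

Lemma enorm_ge0 x : 0 <= enorm x.
Proof. exact: sqrtr_ge0. Qed.

Lemma enorm_sqr x : enorm x ^+ 2 = dotn x x.
Proof. by rewrite sqr_sqrtr ?dotn_ge0. Qed.

End EuclideanSpace.

Section SqrtFacts.
Context {R : rcfType}.

Lemma sqrtr_ltl {p q : R} : 0 < q -> p < q ^+ 2 -> Num.sqrt p < q.
Proof. by move=> q0 pq; rewrite -(ger0_norm (ltW q0)) -sqrtr_sqr ltr_sqrt ?exprn_gt0. Qed.

Lemma sqrtr_ler {p q : R} : 0 <= q -> q ^+ 2 <= p -> q <= Num.sqrt p.
Proof. by move=> q0 qp; rewrite -(ger0_norm q0) -sqrtr_sqr ler_wsqrtr. Qed.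

Lemma sqrtr_lel {p q : R} : 0 <= q -> p <= q ^+ 2 -> Num.sqrt p <= q.
Proof. by move=> q0 pq; rewrite -(ger0_norm q0) -sqrtr_sqr ler_wsqrtr. Qed.

End SqrtFacts.

Lemma creeping_induction (R : realType) (P : R -> Prop) (b d : R) :
  0 < d -> 0 <= b -> P 0 ->
  (forall s s', 0 <= s -> s <= s' -> s' <= b -> s' - s <= d -> P s -> P s') ->
  P b.
Proof.
move=> d0 b0 P0 step; set K := (Num.bound (b / d)).+1.
have K0 : 0 < K%:R :> R by rewrite ltr0n.
have bK : b / K%:R <= d.
  have bdK : b / d < K%:R.
    apply: lt_le_trans (archi_boundP _) _; first by rewrite divr_ge0 // ltW.
    by rewrite ler_nat.
  by rewrite ler_pdivrMr // mulrC -ler_pdivrMr // ltW.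
have bK0 : 0 <= b / K%:R by rewrite divr_ge0 // ltW.
suff /(_ K (leqnn K)) : forall i, (i <= K)%N -> P (i%:R * (b / K%:R)).
  by rewrite mulrCA divff ?mulr1 // gt_eqF.
elim=> [|i IH] iK; first by rewrite mul0r.
apply: (step (i%:R * (b / K%:R))); last exact/IH/ltnW.
- by rewrite mulr_ge0.
- by rewrite ler_wpM2r // ler_nat.
- by rewrite mulrA ler_pdivrMr // mulrC ler_wpM2l // ler_nat.
- by rewrite -mulrBl -natrB // subSnn mul1r.
Qed.

Lemma closure_inf {R : realType} (A : set R) :
  A !=set0 -> has_lbound A -> closure A (inf A).
Proof.
move=> A0 lA W /nbhs_ballP[e e0 eW].
have [a Aa ae] := inf_adherent e0 (conj A0 lA).
exists a; split => //; apply: eW.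
by have := ge_inf lA Aa; rewrite /ball /= ltr_norml; lra.
Qed.

Section Slices.
Context {R : realType} {n : nat}.
Local Notation pt := ('rV[R]_n * R)%type.
Implicit Types (O : set pt) (z : 'rV[R]_n).

Lemma interior_vertical O z t : interior O (z, t) ->
  exists2 e, 0 < e & forall s, `|s - t| < e -> O (z, s).
Proof.
move=> /nbhs_ballP[e e0 eO]; exists e => // s st; apply: eO.
by split; [exact: ballxx | rewrite /ball /= distrC].
Qed.

Lemma closed_slice O z : closed O -> closed [set t | O (z, t)].
Proof.
move=> cO; have := @preimage_closed _ _ (fun s => (z, s)) O; apply => // t _.
exact: (cvg_pair (cvg_cst z) cvg_id).
Qed.

Lemma compact_slice_bounded O z : compact O ->
  exists M, forall t, O (z, t) -> `|t| <= M.
Proof.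
move=> /compact_bounded[M [_ OM]]; exists (`|M| + 1) => t Ozt.
have := OM (`|M| + 1) (ltr_pwDr ltr01 (ler_norm M)) _ Ozt.
by apply: le_trans; rewrite prod_normE /= le_max lexx orbT.
Qed.

Definition slice_top O z := sup [set t | O (z, t)].
Definition slice_bot O z := inf [set t | O (z, t)].

Section CompactSlice.
Context {O : set pt} {z : 'rV[R]_n} {t : R}.
Hypotheses (cO : compact O) (Ozt : O (z, t)).

Let slice_ne : [set t | O (z, t)] !=set0. Proof. by exists t. Qed.

Let slice_closed : closed [set t | O (z, t)].
Proof.
have : closed O by apply: compact_closed => //; exact: norm_hausdorff.
exact: closed_slice.
Qed.

Let slice_has_ub : has_ubound [set t | O (z, t)].
Proof.
have [M OM] := compact_slice_bounded _ z cO.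
by exists M => s /OM; apply: le_trans; exact: ler_norm.
Qed.

Let slice_has_lb : has_lbound [set t | O (z, t)].
Proof.
have [M OM] := compact_slice_bounded _ z cO.
by exists (- M) => s /OM; rewrite ler_norml => /andP[].
Qed.

Lemma slice_top_ge : t <= slice_top O z.
Proof. exact: sup_upper_bound. Qed.

Lemma slice_bot_le : slice_bot O z <= t.
Proof. exact: ge_inf. Qed.

Lemma bdry_slice_top : bdry O (z, slice_top O z).
Proof.
have Otop : O (z, slice_top O z).
  have := closure_sup slice_ne slice_has_ub.
  by rewrite -((closure_id _).1 slice_closed).
split; first exact: subset_closure.
move=> /interior_vertical[e e0 eO].
have /(sup_upper_bound (conj slice_ne slice_has_ub)) :
    O (z, slice_top O z + e / 2).
  by apply: eO; rewrite addrC addKr ger0_norm; lra.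
rewrite -/(slice_top O z); lra.
Qed.

Lemma bdry_slice_bot : bdry O (z, slice_bot O z).
Proof.
have Obot : O (z, slice_bot O z).
  have := closure_inf _ slice_ne slice_has_lb.
  by rewrite -((closure_id _).1 slice_closed).
split; first exact: subset_closure.
move=> /interior_vertical[e e0 eO].
have /(ge_inf slice_has_lb) : O (z, slice_bot O z - e / 2).
  by apply: eO; rewrite addrC addKr normrN ger0_norm; lra.
rewrite -/(slice_bot O z); lra.
Qed.

End CompactSlice.
End Slices.

Section Diameter.
Context {R : realType} {n : nat}.
Local Notation pt := ('rV[R]_n * R)%type.

Lemma pdot_ge0 (X : pt) : 0 <= pdot X X.
Proof. by rewrite addr_ge0 ?dotn_ge0 // -expr2 sqr_ge0. Qed.

Lemma pdot_le_norm (X : pt) : pdot X X <= n.+1%:R * `|X| ^+ 2.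
Proof.
have le_sqr (a : R) : `|a| <= `|X| -> a * a <= `|X| ^+ 2.
  by move=> aX; rewrite -expr2 -real_normK ?num_real // ler_pXn2r ?nnegrE.
rewrite -natr1 mulrDl mul1r mulr_natl /pdot /dotn; apply: lerD.
  rewrite -[n in _ *+ n]card_ord -sumr_const; apply: ler_sum => i _; apply: le_sqr.
  apply: le_trans (_ : `|X.1| <= _); last by rewrite prod_normE le_max lexx.
  by rewrite [`|X.1|]mx_normrE; exact: (le_bigmax _ _ (ord0, i)).
by apply: le_sqr; rewrite prod_normE le_max lexx orbT.
Qed.

Lemma compact_pdot_bounded (O : set pt) : compact O ->
  exists K, forall X Y, O X -> O Y -> pdot (psub X Y) (psub X Y) <= K.
Proof.
move=> /compact_bounded[M [_ OM]]; set M' := `|M| + 1.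
have {}OM X : O X -> `|X| <= M' by apply: OM; rewrite ltr_pwDr ?ler_norm.
exists (n.+1%:R * (2 * M') ^+ 2) => X Y /OM OX /OM OY.
apply: le_trans (pdot_le_norm (X - Y)) _.
rewrite ler_pM2l // ler_pXn2r ?nnegrE //.
- by apply: le_trans (ler_normB _ _) _; lra.
- have := normr_ge0 M; rewrite /M'; lra.
Qed.

Lemma diam_ge_dist {O : set pt} {X Y : pt} : compact O -> O X -> O Y ->
  pnorm (psub X Y) <= diam O.
Proof.
move=> /compact_pdot_bounded[K OK] OX OY.
apply: sup_upper_bound; last by exists X, Y.
split; first by exists (pnorm (psub X Y)), X, Y.
by exists (Num.sqrt K) => _ [U [V [OU OV ->]]]; exact/ler_wsqrtr/OK.
Qed.

End Diameter.

Section OutwardNormals.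
Context {R : realType} {n : nat}.
Local Notation pt := ('rV[R]_n * R)%type.
Context {O : set pt} {N : pt -> pt}.
Hypothesis cO : compact O.
Hypothesis normalN : forall X, bdry O X -> outward_unit_normal O X (N X).

Lemma bdry_sub {X} : bdry O X -> O X.
Proof.
have cl : closed O by apply: compact_closed => //; exact: norm_hausdorff.
by case=> + _; rewrite -((closure_id _).1 cl).
Qed.

Lemma normal_supporting {X Y} : bdry O X -> O Y ->
  dotn (Y.1 - X.1) (N X).1 + (Y.2 - X.2) * (N X).2 <= 0.
Proof. by move=> /normalN[_ +] OY => /(_ Y OY). Qed.

Lemma normal_unit {X} : bdry O X -> dotn (N X).1 (N X).1 + (N X).2 ^+ 2 = 1.
Proof.
move=> /normalN[+ _]; rewrite /pnorm => N1.
by have := sqr_sqrtr (pdot_ge0 (N X)); rewrite N1 expr1n /pdot expr2 => <-.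
Qed.

Lemma normal_diff_le2 {X1 X2} : bdry O X1 -> bdry O X2 ->
  pnorm (psub (N X1) (N X2)) <= 2.
Proof.
move=> /normal_unit u1 /normal_unit u2; rewrite /pnorm; apply: sqrtr_lel => //.
have := dotn_ge0 ((N X1).1 + (N X2).1); have := sqr_ge0 ((N X1).2 + (N X2).2).
rewrite /pdot /= !dotnBl !dotnBr !dotnDl !dotnDr (dotnC (N X2).1).
rewrite !expr2 in u1 u2 *; nra.
Qed.

Lemma normal_diff_le_omega {X1 X2 r} : bdry O X1 -> bdry O X2 ->
  pnorm (psub X1 X2) < r -> pnorm (psub (N X1) (N X2)) <= omega O N r.
Proof.
move=> b1 b2 X12; apply: sup_upper_bound; last by exists X1, X2.
split; first by exists (pnorm (psub (N X1) (N X2))), X1, X2.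
by exists 2 => _ [Y1 [Y2 [c1 c2 _ ->]]]; exact: normal_diff_le2.
Qed.

Lemma chord_slope_le {Q Y} : bdry O Q -> 1 / 2 < (N Q).2 -> O Y -> Q.2 <= Y.2 ->
  (Y.2 - Q.2) ^+ 2 <= 3 * dotn (Y.1 - Q.1) (Y.1 - Q.1).
Proof.
move=> bQ v_gt OY QY.
have supp := normal_supporting bQ OY; have unit := normal_unit bQ.
have CS := dotn_CauchySchwarz (Y.1 - Q.1) (N Q).1.
have w0 := dotn_ge0 (Y.1 - Q.1).
set w := dotn (Y.1 - Q.1) (Y.1 - Q.1) in CS w0 *.
set p := dotn (Y.1 - Q.1) (N Q).1 in supp CS.
set h := Y.2 - Q.2 in supp *; set v := (N Q).2 in v_gt supp unit.
have h0 : 0 <= h by rewrite subr_ge0.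
have hv0 : 0 <= h * v by rewrite mulr_ge0 //; lra.
have hv_p : (h * v) ^+ 2 <= p ^+ 2.
  by rewrite -(sqrrN p) ler_pXn2r ?nnegrE //; lra.
have : (h * v) ^+ 2 <= w * (1 - v ^+ 2).
  by apply: le_trans hv_p _; rewrite -unit addrK.
have hw0 : 0 <= h ^+ 2 + w by rewrite addr_ge0 ?sqr_ge0.
have : (h ^+ 2 + w) / 4 <= (h ^+ 2 + w) * v ^+ 2.
  by rewrite ler_wpM2l //; nra.
rewrite exprMn; lra.
Qed.

Lemma steep_bdry_height_le {X1 X2} : bdry O X1 -> bdry O X2 ->
  1 / 2 < (N X1).2 -> 1 / 2 < (N X2).2 ->
  (X1.2 - X2.2) ^+ 2 <= 3 * dotn (X1.1 - X2.1) (X1.1 - X2.1).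
Proof.
move=> b1 b2 steep1 steep2; have [le12|/ltW le21] := leP X1.2 X2.2.
  by rewrite -sqrrN opprB -dotn_sqrN opprB; exact: chord_slope_le (bdry_sub b2) _.
exact: chord_slope_le (bdry_sub b1) _.
Qed.

Section NearX0.
Context {Th r : R} {X0 : pt}.
Hypotheses (convO : Defs.convex_set O) (Th_ge : 1 / 2 <= Th) (Th_lt : Th < 1).
Hypotheses (r_gt0 : 0 < r) (omega_lt : omega O N r < Num.sqrt (2 - 2 * Th)).
Hypotheses (bX0 : bdry O X0) (NX0 : N X0 = e_last R n).

Lemma below_X0 {Y} : O Y -> Y.2 <= X0.2.
Proof.
move=> /(normal_supporting bX0); rewrite NX0 /= dotn0r add0r mulr1.
by rewrite subr_le0.
Qed.

Lemma normal_near_X0 {Q} : bdry O Q -> pdot (psub Q X0) (psub Q X0) < r ^+ 2 ->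
  Th < (N Q).2.
Proof.
move=> bQ /(sqrtr_ltl r_gt0) QX0.
have := le_lt_trans (normal_diff_le_omega bQ bX0 QX0) omega_lt.
rewrite ltr_sqrt; last by have := Th_lt; lra.
have := normal_unit bQ.
rewrite NX0 /pdot /= subr0; lra.
Qed.

Definition along (x : 'rV[R]_n) (s : R) := X0.1 + s *: (x - X0.1).

Lemma along_mem {x t s} : O (x, t) -> 0 <= s <= 1 ->
  O (along x s, X0.2 - s * (X0.2 - t)).
Proof.
move=> Oxt s01; have := convO _ _ _ Oxt (bdry_sub bX0) s01.
rewrite /padd /pscale /=.
congr (O (_, _)); last by ring.
by apply/rowP => i; rewrite /along !mxE; ring.
Qed.

Section Depth.
Context {x : 'rV[R]_n} {t : R}.
Hypotheses (bX : bdry O (x, t)) (nuX : 0 < (N (x, t)).2).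
Hypothesis x_near : 4 * dotn (x - X0.1) (x - X0.1) < r ^+ 2.

Let a := dotn (x - X0.1) (x - X0.1).
Let H := X0.2 - t.
Let k := Num.sqrt (3 * a).
Let depth s := X0.2 - slice_top O (along x s).

Let Ox : O (x, t). Proof. exact: bdry_sub bX. Qed.

Let H_ge0 : 0 <= H. Proof. by rewrite subr_ge0; exact: below_X0 Ox. Qed.

Let k_ge0 : 0 <= k. Proof. exact: sqrtr_ge0. Qed.

Let top_bdry {s} : 0 <= s <= 1 -> bdry O (along x s, slice_top O (along x s)).
Proof. by move=> s01; exact: bdry_slice_top cO (along_mem Ox s01). Qed.

Let depth_ge0 {s} : 0 <= s <= 1 -> 0 <= depth s.
Proof. by move=> /top_bdry/bdry_sub/below_X0; rewrite subr_ge0. Qed.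

Let depth_le_chord s : 0 <= s <= 1 -> depth s <= s * H.
Proof.
by move=> s01; have := slice_top_ge cO (along_mem Ox s01); rewrite /depth /H; lra.
Qed.

Let depth_concave {s s'} : 0 <= s -> s <= s' -> s' <= 1 -> s < 1 ->
  depth s' <= depth s + (s' - s) / (1 - s) * H.
Proof.
move=> s0 ss' s'1 s1; set l := (s' - s) / (1 - s).
have s01 : 0 <= s <= 1 by apply/andP; lra.
have l01 : 0 <= l <= 1.
  by apply/andP; split; rewrite ?ler_pdivrMr ?divr_ge0 ?mul1r; lra.
have := convO _ _ _ Ox (bdry_sub (top_bdry s01)) l01; rewrite /padd /pscale /=.
have -> : l *: x + (1 - l) *: along x s = along x s'.
  by apply/rowP => i; rewrite /along /l !mxE; field; lra.
move=> /(slice_top_ge cO); have := depth_ge0 s01; rewrite /depth /H; nra.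
Qed.

Let depth_cone s : 0 <= s <= 1 -> depth s < Num.sqrt (r ^+ 2 - a) ->
  depth s <= s * k.
Proof.
move=> s01 depth_lt; have := depth_ge0 s01; have := dotn_ge0 (x - X0.1).
rewrite -/a => a0 d0.
have r2a : 0 <= r ^+ 2 - a by have := x_near; rewrite -/a; lra.
have sa : s ^+ 2 * a <= a by rewrite ler_piMl // expr_le1 //; case/andP: s01.
have d2 : depth s ^+ 2 < r ^+ 2 - a.
  by rewrite -(sqr_sqrtr r2a) ltr_pXn2r ?nnegrE ?sqrtr_ge0.
have alongB : along x s - X0.1 = s *: (x - X0.1) by rewrite /along addrC addKr.
have dist_along : dotn (along x s - X0.1) (along x s - X0.1) = s ^+ 2 * a.
  by rewrite alongB dotnZl dotnZr mulrA.
have Q_near : pdot (psub (along x s, slice_top O (along x s)) X0)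
                   (psub (along x s, slice_top O (along x s)) X0) < r ^+ 2.
  by rewrite /pdot /= dist_along; move: d2; rewrite /depth -sqrrN opprB; lra.
have steep : 1 / 2 < (N (along x s, slice_top O (along x s))).2.
  by have := normal_near_X0 (top_bdry s01) Q_near; have := Th_ge; lra.
have := chord_slope_le (top_bdry s01) steep (bdry_sub bX0)
  (below_X0 (bdry_sub (top_bdry s01))).
rewrite -/(depth s) /= -[X0.1 - _]opprB dotn_sqrN dist_along.
have s0 : 0 <= s by case/andP: s01.
move=> slope2; rewrite -(ler_pXn2r (_ : 2 > 0)%N) ?nnegrE ?mulr_ge0 //.
by rewrite exprMn sqr_sqrtr; lra.
Qed.

Let depth_le_cone {s} : 0 <= s < 1 -> depth s <= s * k.
Proof.
move=> /andP[s0 s_lt1]; set mu := Num.sqrt (r ^+ 2 - a) - k.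
have a0 : 0 <= a := dotn_ge0 _.
have a_lt : 3 * a < r ^+ 2 - a by have := x_near; rewrite -/a; lra.
have mu0 : 0 < mu by rewrite subr_gt0 ltr_sqrt //; lra.
have H1 : 0 < H + 1 by have := H_ge0; lra.
(* The step keeps the concavity increment (s2 - s1) / (1 - s1) * H below mu. *)
apply: (@creeping_induction _ (fun s => depth s <= s * k) s
  ((1 - s) * mu / (2 * (H + 1)))) => //.
- by rewrite divr_gt0 ?mulr_gt0 // subr_gt0.
- by have := depth_le_chord 0; rewrite !mul0r; apply; rewrite lexx ler01.
move=> s1 s2 s1_ge0 s12 s2s step_le depth1.
have s1_lt1 : s1 < 1 by lra.
have s2_01 : 0 <= s2 <= 1 by apply/andP; lra.
apply: depth_cone => //.
have incr_lt : (s2 - s1) / (1 - s1) * H < mu.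
  rewrite mulrAC ltr_pdivrMr ?subr_gt0 //.
  move: step_le; rewrite ler_pdivlMr ?mulr_gt0 // => step_le.
  have := H_ge0; nra.
have := depth_concave s1_ge0 s12 (ltW (le_lt_trans s2s s_lt1)) s1_lt1.
have : s1 * k <= k by rewrite ler_piMl //; lra.
rewrite /mu in incr_lt; lra.
Qed.

Let height_le_depth {s} : 0 <= s < 1 ->
  H <= depth s + (1 - s) * `|dotn (x - X0.1) (N (x, t)).1| / (N (x, t)).2.
Proof.
move=> /andP[s0 s1]; have s01 : 0 <= s <= 1 by apply/andP; lra.
have := normal_supporting bX (bdry_sub (top_bdry s01)); rewrite /=.
have -> : along x s - x = - ((1 - s) *: (x - X0.1)).
  by apply/rowP => i; rewrite /along !mxE; ring.
rewrite -scaleNr dotnZl.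
set p := dotn (x - X0.1) _; set v := (N (x, t)).2 => supp.
have v0 : 0 < v := nuX.
have p_le : 0 <= (1 - s) * (`|p| - p).
  by rewrite mulr_ge0 ?subr_ge0 ?ler_norm //; lra.
have : slice_top O (along x s) - t <= (1 - s) * `|p| / v.
  by rewrite ler_pdivlMr //; lra.
rewrite /depth /H; lra.
Qed.

Let height_le : H <= k.
Proof.
set C := `|dotn (x - X0.1) (N (x, t)).1| / (N (x, t)).2.
have C0 : 0 <= C by rewrite divr_ge0 // ltW.
apply/ler_addgt0Pr => e e0; set s := C / (C + e).
have Ce : 0 < C + e by lra.
have s01 : 0 <= s < 1.
  apply/andP; split; first exact: divr_ge0 C0 (ltW Ce).
  by rewrite /s ltr_pdivrMr // mul1r; lra.
have s1 : (1 - s) * C = e * s by rewrite /s; field; lra.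
have := height_le_depth s01; have := depth_le_cone s01.
have s_le1 : s <= 1 by case/andP: s01 => _ /ltW.
have := ler_piMl k_ge0 s_le1; have := ler_piMr (ltW e0) s_le1.
by rewrite -mulrA -/C s1; lra.
Qed.

Lemma upper_normal_over_ball : Th < (N (x, t)).2.
Proof.
apply: (normal_near_X0 bX); rewrite /pdot /= -/a.
have : H ^+ 2 <= 3 * a.
  by rewrite -[3 * a]sqr_sqrtr ?ler_pXn2r ?nnegrE ?mulr_ge0 ?dotn_ge0 // height_le.
have := x_near; rewrite -/a /H; lra.
Qed.

End Depth.

Lemma r_le_diam : interior O !=set0 -> r <= diam O.
Proof.
move=> [[z tz] /interior_vertical[e e0 eO]].
have Oz : O (z, tz) by apply: eO; rewrite subrr normr0.
have Oz_below : O (z, tz - e / 2).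
  by apply: eO; rewrite addrC addKr normrN ger0_norm; lra.
have bot := bdry_slice_bot cO Oz.
have bot_le := slice_bot_le cO Oz_below.
have : (N (z, slice_bot O z)).2 <= 0.
  have := normal_supporting bot Oz; rewrite /= subrr dotnC dotn0r add0r; nra.
have [far|/(normal_near_X0 bot)] := leP (r ^+ 2) (pdot (psub (z, slice_bot O z) X0)
                                                    (psub (z, slice_bot O z) X0)).
  move=> _; apply: le_trans _ (diam_ge_dist cO (bdry_sub bot) (bdry_sub bX0)).
  by apply: sqrtr_ler => //; exact: ltW.
by have := Th_ge; lra.
Qed.

Lemma graph_height_lipschitz {x1 t1 x2 t2} :
  interior O !=set0 -> enorm (x1 - X0.1) < r / 4 ->
  bdry_plus O N X0 (x1, t1) -> bdry_plus O N X0 (x2, t2) ->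
  `|t1 - t2| <= 4 * diam O / r * enorm (x1 - x2).
Proof.
move=> int0 x1_near [b1 up1] [b2 up2].
have r_le := r_le_diam int0; have := Th_ge; have := r_gt0 => r0 Th_half.
have up X : 0 < pdot (N X) (N X0) -> 0 < (N X).2.
  by rewrite NX0 /pdot /= dotn0r add0r mulr1.
have := enorm_ge0 (x1 - x2); have := enorm_sqr (x1 - x2).
set e := enorm (x1 - x2) => e_sqr e0.
have [e_small|e_large] := ltP e (r / 4); last first.
  apply: le_trans (_ : diam O <= _).
    apply: le_trans (diam_ge_dist cO (bdry_sub b1) (bdry_sub b2)).
    rewrite /pnorm /pdot /=; apply: sqrtr_ler => //.
    by rewrite real_normK ?num_real // expr2 lerDr dotn_ge0.
  have -> : 4 * diam O / r * e = diam O * (4 * e / r) by ring.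
  rewrite ler_peMr ?(le_trans (ltW r0)) //.
  by rewrite ler_pdivlMr // mul1r; lra.
have sq16 u : 0 <= u -> u < r / 4 -> 16 * u ^+ 2 < r ^+ 2 by move=> ? ?; nra.
have := sq16 _ (enorm_ge0 _) x1_near; have := sq16 _ e0 e_small.
rewrite e_sqr enorm_sqr => e_near x1_near2.
have near1 : 4 * dotn (x1 - X0.1) (x1 - X0.1) < r ^+ 2.
  by have := dotn_ge0 (x1 - X0.1); lra.
have near2 : 4 * dotn (x2 - X0.1) (x2 - X0.1) < r ^+ 2.
  have -> : x2 - X0.1 = - (x1 - x2) + (x1 - X0.1) by rewrite opprB addrA subrK.
  by have := dotn_sqrD_le (- (x1 - x2)) (x1 - X0.1); rewrite dotn_sqrN; lra.
have steep1 := upper_normal_over_ball b1 (up _ up1) near1.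
have steep2 := upper_normal_over_ball b2 (up _ up2) near2.
have half X : Th < (N X).2 -> 1 / 2 < (N X).2 by lra.
have := steep_bdry_height_le b1 b2 (half _ steep1) (half _ steep2).
rewrite /= -e_sqr => height_sqr.
have : `|t1 - t2| <= 2 * e.
  rewrite -(ler_pXn2r (_ : 2 > 0)%N) ?nnegrE ?mulr_ge0 //.
  by rewrite real_normK ?num_real // exprMn; have := sqr_ge0 e; lra.
move=> /le_trans; apply; apply: (ler_wpM2r e0).
by rewrite ler_pdivlMr //; lra.
Qed.

End NearX0.
End OutwardNormals.

Theorem lemma2p10 (R : realType) (n : nat) (O : set ('rV[R]_n * R)%type)
  (N : ('rV[R]_n * R)%type -> ('rV[R]_n * R)%type) (Theta rT : R)
  (X0 : ('rV[R]_n * R)%type) (beta : 'rV[R]_n -> R) :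
  convex_body O ->
  C1_normal_field O N ->
  1 / 2 <= Theta < 1 ->
  0 < rT ->
  omega O N rT < Num.sqrt (2 - 2 * Theta) ->
  bdry O X0 ->
  N X0 = e_last R n ->
  (* dOmega^+(X0) is the graph of beta over Omega_{X0} *)
  (forall x t, bdry_plus O N X0 (x, t) -> t = beta x) ->
  forall x1 x2 : 'rV[R]_n,
    enorm (x1 - X0.1) < rT / 4 ->
    proj_plus O N X0 x1 ->
    proj_plus O N X0 x2 ->
    `|beta x1 - beta x2| <= 4 * diam O / rT * enorm (x1 - x2).
Proof.
move=> [cO convO int0] [normalN _ _] /andP[Th_ge Th_lt] r_gt0 omega_lt bX0 NX0.
move=> graph x1 x2 x1_near [t1 b1] [t2 b2].
rewrite -(graph _ _ b1) -(graph _ _ b2).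
exact: (graph_height_lipschitz cO normalN convO Th_ge Th_lt r_gt0 omega_lt bX0 NX0
  int0 x1_near b1 b2).
Qed.
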